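(* Let $\mathbf a=(a_0,\dots,a_n)$ be integers $a_i>1$. For sufficiently small $\epsilon>0$ there is a $C(L)$-equivariant Liouville homotopy between $(X^1_\epsilon,-d^{\mathbb C}\phi_0)$ and $(X^1_\epsilon,\lambda_{\mathbf a})$.
   Context: $f(\mathbf z)=\sum_k z_k^{a_k}$ on $\mathbb{C}^{n+1}$, $V_{\mathbf a}(\epsilon)=f^{-1}(\epsilon)$, $X^1_\epsilon=V_{\mathbf a}(\epsilon)\cap B(1)$ with $B(1)$ the closed unit ball. For $t\in[0,1]$ let $\phi_t(\mathbf z)=\frac18\sum_j c_j(t)|z_j|^2$ with $c_j(t)=1+t(a_j-1)$, and $d^{\mathbb C}\phi=d\phi\circ i$; thus $-d^{\mathbb C}\phi_1=\lambda_{\mathbf a}=\frac{i}{8}\sum_k a_k(z_kd\bar z_k-\bar z_kdz_k)$ (forms restricted to $X^1_\epsilon$). With $L=\mathrm{lcm}(a_j)$, $b_j=L/a_j$, $\zeta=e^{2\pi i/L}$, the group $C(L)=\langle\zeta\rangle$ acts by $z_j\mapsto\zeta^{b_j}z_j$. A $C(L)$-equivariant Liouville homotopy is a smooth family of $C(L)$-invariant 1-forms $\lambda_s$ on $X^1_\epsilon$, each making $X^1_\epsilon$ a Liouville domain, joining the two given forms. *)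

From HB Require Import structures.
From mathcomp Require Import all_boot all_order all_algebra.
From mathcomp Require Import all_classical all_reals all_analysis.
From mathcomp Require Import complex.
Set Implicit Arguments. Unset Strict Implicit. Unset Printing Implicit Defensive.
Import Order.TTheory GRing.Theory Num.Theory.
Import numFieldNormedType.Exports.
Local Open Scope ring_scope.

Section Defs.
Variable R : realType.

Fixpoint iterD (V : normedModType R) (vs : seq V) (g : V -> R) : V -> R :=
  if vs is v :: vs' then 'D_v (iterD vs' g) else g.

Definition smooth (V : normedModType R) (g : V -> R) : Prop :=
  forall (vs : seq V) (x : V), differentiable (iterD vs g) x.

(* a point p = (x, y) represents z with z_k = x_k + i y_k *)
Definition Cn (n : nat) := ('rV[R]_n.+1 * 'rV[R]_n.+1)%type.

Definition zc (n : nat) (p : Cn n) (k : 'I_n.+1) : R[i] :=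
  Complex (p.1 ord0 k) (p.2 ord0 k).

Definition mul_i (n : nat) (v : Cn n) : Cn n := (- v.2, v.1).

Definition rdot (n : nat) (p q : Cn n) : R :=
  \sum_(k < n.+1) (p.1 ord0 k * q.1 ord0 k + p.2 ord0 k * q.2 ord0 k).

Definition brieskorn (n : nat) (a : 'I_n.+1 -> nat) (p : Cn n) : R[i] :=
  \sum_(k < n.+1) (zc p k) ^+ (a k).

Definition Xeps (n : nat) (a : 'I_n.+1 -> nat) (eps : R) (p : Cn n) : Prop :=
  brieskorn a p = Complex eps 0 /\ rdot p p <= 1.

Definition dXeps (n : nat) (a : 'I_n.+1 -> nat) (eps : R) (p : Cn n) : Prop :=
  brieskorn a p = Complex eps 0 /\ rdot p p = 1.

(* tangent space of V_a(eps) at p: kernel of the complex differential of f *)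
Definition tangent (n : nat) (a : 'I_n.+1 -> nat) (p v : Cn n) : Prop :=
  \sum_(k < n.+1) (a k)%:R * (zc p k) ^+ (a k).-1 * zc v k = 0.

(* omega p v = value of the form at the point p on the vector v *)
Definition oneform (n : nat) := Cn n -> Cn n -> R.

(* exterior derivative of a 1-form, evaluated on constant vector fields u, w *)
Definition dform (n : nat) (om : oneform n) (p u w : Cn n) : R :=
  'D_u (fun q => om q w) p - 'D_w (fun q => om q u) p.

(* (X^1_eps, lambda) is a Liouville domain: X^1_eps is a manifold with
   boundary (the sphere is transverse to V_a(eps) along the boundary),
   d lambda is symplectic on X^1_eps, and the Liouville vector field Y
   (iota_Y d lambda = lambda) points outward along the boundary. *)
Definition liouville_domain (n : nat) (a : 'I_n.+1 -> nat) (eps : R)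
    (lam : oneform n) : Prop :=
  (forall p, dXeps a eps p -> exists v, tangent a p v /\ rdot p v != 0) /\
  (forall p, Xeps a eps p -> forall u, tangent a p u -> u != 0 ->
      exists w, tangent a p w /\ dform lam p u w != 0) /\
  (forall p, dXeps a eps p ->
      exists Y, tangent a p Y /\
        (forall w, tangent a p w -> dform lam p Y w = lam p w) /\
        0 < rdot p Y).

Definition Lcm (n : nat) (a : 'I_n.+1 -> nat) : nat := \big[lcmn/1%N]_(j < n.+1) a j.

(* action of zeta^m, zeta = exp(2 pi i / L): z_j |-> zeta^(m b_j) z_j, b_j = L / a_j *)
Definition CL_act (n : nat) (a : 'I_n.+1 -> nat) (m : nat) (p : Cn n) : Cn n :=
  let th j := (2 * pi * (m * (Lcm a %/ a j))%:R / (Lcm a)%:R : R) in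
  (\row_j (cos (th j) * p.1 ord0 j - sin (th j) * p.2 ord0 j),
   \row_j (sin (th j) * p.1 ord0 j + cos (th j) * p.2 ord0 j)).

Definition CL_invariant (n : nat) (a : 'I_n.+1 -> nat) (eps : R)
    (lam : oneform n) : Prop :=
  forall m p v, Xeps a eps p -> tangent a p v ->
    lam (CL_act a m p) (CL_act a m v) = lam p v.

Definition cj (n : nat) (a : 'I_n.+1 -> nat) (t : R) (j : 'I_n.+1) : R :=
  1 + t * ((a j)%:R - 1).

Definition phi (n : nat) (a : 'I_n.+1 -> nat) (t : R) (p : Cn n) : R :=
  8^-1 * \sum_(j < n.+1) cj a t j * (p.1 ord0 j ^+ 2 + p.2 ord0 j ^+ 2).

Definition dC (n : nat) (g : Cn n -> R) : oneform n :=
  fun p v => 'D_(mul_i v) g p.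

Definition lambda_a (n : nat) (a : 'I_n.+1 -> nat) : oneform n :=
  fun p v => @complex.Re R ((Complex 0 (8^-1)) *
    \sum_(k < n.+1) (a k)%:R * (zc p k * conjc (zc v k) - conjc (zc p k) * zc v k)).

Definition CL_liouville_homotopy (n : nat) (a : 'I_n.+1 -> nat) (eps : R)
    (lam0 lam1 : oneform n) : Prop :=
  exists Lam : R -> oneform n,
    (forall s p (c : R) u w, Lam s p (c *: u + w) = c * Lam s p u + Lam s p w) /\
    (forall v, smooth (fun q : R * Cn n => Lam q.1 q.2 v)) /\
    (forall s, 0 <= s <= 1 ->
       CL_invariant a eps (Lam s) /\ liouville_domain a eps (Lam s)) /\
    (forall p v, Xeps a eps p -> tangent a p v -> Lam 0 p v = lam0 p v) /\
    (forall p v, Xeps a eps p -> tangent a p v -> Lam 1 p v = lam1 p v).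

End Defs.

From HB Require Import structures.
From mathcomp Require Import all_boot all_order all_algebra.
From mathcomp Require Import all_classical all_reals all_analysis.
From mathcomp Require Import complex.
From mathcomp Require Import ring lra.

(* Every form of the homotopy is [-d^C] of a Kähler potential
   [1/8 sum_j c_j |z_j|^2] with positive weights [c_j]. Such a form is invariant
   under the diagonal rotations generating [C(L)], and the pair [u, i u] shows
   that its differential is nondegenerate on every complex tangent space of
   [V_a(eps)]. What remains is that the Liouville field points outward along the
   boundary [f = eps, |z| = 1]. Correcting [p/2] along the conjugate gradient
   [G_j = a_j z_j^(a_j - 1)] weighted by [1/c_j] gives a Liouville field tangent
   to the fibre, and it is outward iff
   [sum_j Re (S conj (z_j G_j)) / c_j < sum_j |G_j|^2 / c_j], [S = sum_j G_j z_j].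
   For [c = 1] this is the strict Cauchy-Schwarz inequality [|S|^2 < sum |G_j|^2],
   for [c = a] it reads [eps Re S < sum_j |G_j|^2 / a_j]. Both hold for small
   [eps]: a coordinate with [|z_j|^2 >= 1/(n+1)] bounds [sum |G_j|^2] from below,
   [Re S <= sum a_j], and equality in Cauchy-Schwarz (a radial gradient) would
   force [eps Re S >= sum |G_j|^2 / sum a_j]. Taking [1/c_j(s)] affine in [s] (up to a
   common positive factor) makes the condition at time [s] a convex combination
   of the two endpoint conditions. *)

Set Implicit Arguments. Unset Strict Implicit. Unset Printing Implicit Defensive.
Import Order.TTheory GRing.Theory Num.Theory.
Import numFieldNormedType.Exports.
Local Open Scope ring_scope.
Local Open Scope classical_set_scope.
(* Unqualified [Re]/[Im] would be those of [numClosedFieldType]. *)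
Local Notation Re := (@complex.Re _).
Local Notation Im := (@complex.Im _).

Section Polynomial_functions.
Variables (R : realType) (V : normedModType R).

Lemma derive_along_quadratic (f : V -> R) (x v : V) (A B : R) :
  (forall h : R, f (h *: v + x) = f x + h * A + h ^+ 2 * B) -> 'D_v f x = A.
Proof.
move=> hf; apply: cvg_lim => //.
have hB : (fun h : R => A + h * B) @ 0^' --> A + 0 * B.
  by apply: cvg_within_filter; apply: cvgD; [exact: cvg_cst | exact: cvgMr_tmp cvg_id].
rewrite mul0r addr0 in hB.
apply: cvg_trans hB; apply: near_eq_cvg; near=> h.
have h0 : h != 0 by near: h; exact: nbhs_dnbhs_neq.
by rewrite /= hf -[_ *: _]/(_ * _); field.
Unshelve. all: end_near.
Qed.

Inductive polyfun : (V -> R) -> Prop :=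
  | polyfun_cst r : polyfun (fun=> r)
  | polyfun_lin (l : V -> R) : scalar l -> continuous l -> polyfun l
  | polyfun_add f g : polyfun f -> polyfun g -> polyfun (fun x => f x + g x)
  | polyfun_mul f g : polyfun f -> polyfun g -> polyfun (fun x => f x * g x).

Lemma scalar_differentiable (l : V -> R) x :
  scalar l -> continuous l -> differentiable l x.
Proof.
move=> lin cl.
pose L : {linear V -> R} := HB.pack l (GRing.isLinear.Build _ _ _ _ _ lin).
exact: (@linear_differentiable _ _ _ L).
Qed.

Lemma polyfun_differentiable f x : polyfun f -> differentiable f x.
Proof.
elim=> [r|l lin cl|{}f g _ df _ dg|{}f g _ df _ dg].
- exact: differentiable_cst.
- exact: scalar_differentiable.
- exact: differentiableD.
- exact: differentiableM.
Qed.

Lemma polyfun_derive f v : polyfun f -> polyfun ('D_v f).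
Proof.
have der g x : polyfun g -> derivable g x v.
  by move=> pg; apply/diff_derivable/polyfun_differentiable.
elim=> [r|l lin cl|{}f g pf Df pg Dg|{}f g pf Df pg Dg].
- have -> : 'D_v (fun=> r) = fun=> 0 by apply/funext => x; exact: derive_cst.
  exact: polyfun_cst.
- have -> : 'D_v l = fun=> l v.
    apply/funext => x; apply: (derive_along_quadratic (A := l v) (B := 0)) => h.
    by rewrite lin; ring.
  exact: polyfun_cst.
- have -> : 'D_v (fun x => f x + g x) = fun x => 'D_v f x + 'D_v g x.
    by apply/funext => x; apply: (deriveD (der _ _ pf) (der _ _ pg)).
  exact: polyfun_add.
- have -> : 'D_v (fun x => f x * g x) = fun x => f x * 'D_v g x + g x * 'D_v f x.
    by apply/funext => x; apply: (deriveM (der _ _ pf) (der _ _ pg)).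
  by apply: polyfun_add; exact: polyfun_mul.
Qed.

Lemma polyfun_smooth f : polyfun f -> smooth f.
Proof.
move=> pf vs x; apply: polyfun_differentiable.
by elim: vs => [|v vs IH] //=; exact: polyfun_derive IH.
Qed.

Lemma polyfun_sub f g : polyfun f -> polyfun g -> polyfun (fun x => f x - g x).
Proof.
move=> pf pg; have -> : (fun x => f x - g x) = fun x => f x + (-1) * g x.
  by apply/funext => x; rewrite mulN1r.
by apply: polyfun_add => //; apply: polyfun_mul => //; exact: polyfun_cst.
Qed.

Lemma polyfun_sum (I : Type) (r : seq I) (P : pred I) (F : I -> V -> R) :
  (forall i, polyfun (F i)) -> polyfun (fun x => \sum_(i <- r | P i) F i x).
Proof.
move=> pF; elim: r => [|i r IH].
  under [fun x => _]funext do rewrite big_nil; exact: polyfun_cst.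
under [fun x => _]funext do rewrite big_cons.
case: (P i) => //; exact: polyfun_add.
Qed.

Lemma polyfun_prod (I : Type) (r : seq I) (P : pred I) (F : I -> V -> R) :
  (forall i, polyfun (F i)) -> polyfun (fun x => \prod_(i <- r | P i) F i x).
Proof.
move=> pF; elim: r => [|i r IH].
  under [fun x => _]funext do rewrite big_nil; exact: polyfun_cst.
under [fun x => _]funext do rewrite big_cons.
case: (P i) => //; exact: polyfun_mul.
Qed.

End Polynomial_functions.

Section Parameter_coordinates.
Variables (R : realType) (n : nat).

Lemma polyfun_param : polyfun (fun q : R * Cn R n => q.1).
Proof. by apply: polyfun_lin => [k u w //|q]; exact: cvg_fst. Qed.

Lemma polyfun_re j : polyfun (fun q : R * Cn R n => q.2.1 ord0 j).
Proof.
apply: polyfun_lin => [k u w|q]; first by rewrite /= !mxE.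
apply: (@continuous_comp _ _ _ (fun q : R * Cn R n => q.2.1) (fun M => M ord0 j)).
  by apply: (@continuous_comp _ _ _ snd fst); [exact: cvg_snd | exact: cvg_fst].
exact: coord_continuous.
Qed.

Lemma polyfun_im j : polyfun (fun q : R * Cn R n => q.2.2 ord0 j).
Proof.
apply: polyfun_lin => [k u w|q]; first by rewrite /= !mxE.
apply: (@continuous_comp _ _ _ (fun q : R * Cn R n => q.2.2) (fun M => M ord0 j)).
  by apply: (@continuous_comp _ _ _ snd snd); exact: cvg_snd.
exact: coord_continuous.
Qed.

End Parameter_coordinates.

Section Real_lemmas.
Variable R : realFieldType.

Lemma ler_psum_term (I : finType) (F : I -> R) j :
  (forall i, 0 <= F i) -> F j <= \sum_i F i.
Proof.
move=> F_ge0; rewrite (bigD1 j) //= lerDl.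
by apply: sumr_ge0 => i _; exact: F_ge0.
Qed.

Lemma exists_ge_mean n (F : 'I_n.+1 -> R) : exists j, (\sum_i F i) / n.+1%:R <= F j.
Proof.
apply/not_existsP => lt_mean.
have : \sum_(i < n.+1) F i < \sum_(i < n.+1) (\sum_i F i) / n.+1%:R.
  apply: ltr_sum => [|i _]; first by apply/hasP; exists ord0; rewrite ?mem_index_enum.
  by rewrite ltNge; apply/negP; exact: lt_mean.
by rewrite sumr_const card_ord -[_ *+ n.+1]mulr_natr divfK ?pnatr_eq0 // ltxx.
Qed.

Lemma ler_expn_lb (r x : R) (k m : nat) :
  0 <= r <= 1 -> r <= x -> (k <= m)%N -> r ^+ m <= x ^+ k.
Proof.
move=> /andP[r_ge0 r_le1] r_le_x k_le_m.
apply: le_trans (_ : r ^+ k <= _); first exact: ler_wiXn2l.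
by rewrite lerXn2r // nnegrE (le_trans r_ge0).
Qed.

Lemma convex_comb_gt0 (s x y : R) :
  0 <= s <= 1 -> 0 < x -> 0 < y -> 0 < (1 - s) * x + s * y.
Proof.
move=> /andP[s_ge0 s_le1] x_gt0 y_gt0.
have [->|s_neq0] := eqVneq s 0; first by rewrite subr0 mul1r mul0r addr0.
have : 0 < s * y by rewrite mulr_gt0 // lt0r s_neq0.
have : 0 <= (1 - s) * x by rewrite mulr_ge0 ?subr_ge0 // ltW.
lra.
Qed.

End Real_lemmas.

Section Complex_sqnorm.
Variable R : rcfType.
Implicit Types x y z s : R[i].
Local Open Scope complex_scope.

Definition sqnormc x : R := Re x ^+ 2 + Im x ^+ 2.

Lemma sqnormc_ge0 x : 0 <= sqnormc x.
Proof. rewrite /sqnormc; nra. Qed.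

Lemma sqnormc_eq0 x : sqnormc x = 0 -> x = 0.
Proof.
case: x => u v; rewrite /sqnormc /= => h.
have hu : u = 0 by nra.
have hv : v = 0 by nra.
by rewrite hu hv.
Qed.

Lemma sqnormcM x y : sqnormc (x * y) = sqnormc x * sqnormc y.
Proof. by case: x y => [u v] [u' v']; rewrite /sqnormc /=; ring. Qed.

Lemma sqnormcX x k : sqnormc (x ^+ k) = sqnormc x ^+ k.
Proof.
elim: k => [|k IH]; first by rewrite /sqnormc /=; ring.
by rewrite !exprS sqnormcM IH.
Qed.

Lemma sqnormc_real (r : R) : sqnormc r%:C = r ^+ 2.
Proof. by rewrite /sqnormc /=; ring. Qed.

Lemma Re_sqr_le x : Re x ^+ 2 <= sqnormc x.
Proof. rewrite /sqnormc; nra. Qed.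

Lemma Re_sum (I : Type) (r : seq I) (P : pred I) (F : I -> R[i]) :
  Re (\sum_(i <- r | P i) F i) = \sum_(i <- r | P i) Re (F i).
Proof. by apply: (big_morph (@complex.Re R)) => // -[? ?] [? ?]. Qed.

Lemma Im_sum (I : Type) (r : seq I) (P : pred I) (F : I -> R[i]) :
  Im (\sum_(i <- r | P i) F i) = \sum_(i <- r | P i) Im (F i).
Proof. by apply: (big_morph (@complex.Im R)) => // -[? ?] [? ?]. Qed.

Lemma Re_mul_real (k : R) x : Re (k%:C * x) = k * Re x.
Proof. by case: x => u v /=; ring. Qed.

Lemma Re_mulJ_real (k : R) x : Re (x * (k%:C)^*) = k * Re x.
Proof. by case: x => ? ? /=; ring. Qed.

Lemma Re_mulJ_realM (k : R) x y : Re (x * (k%:C * y)^*) = k * Re (x * y^*).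
Proof. by case: x y => [? ?] [? ?] /=; ring. Qed.

Lemma Re_Jmul x : Re (x^* * x) = sqnormc x.
Proof. by case: x => ? ?; rewrite /sqnormc /=; ring. Qed.

Lemma sqnormcB_mulJ x s z :
  sqnormc (x - s * z^*) = sqnormc x - 2 * Re (s^* * (x * z)) + sqnormc s * sqnormc z.
Proof. by case: x s z => [? ?] [? ?] [? ?]; rewrite /sqnormc /=; ring. Qed.

Lemma Re_mulJ_radial s z : Re (s * (s * z^* * z)^*) = sqnormc s * sqnormc z.
Proof. by case: s z => [? ?] [? ?]; rewrite /sqnormc /=; ring. Qed.

Lemma natrC k : (k%:R : R[i]) = (k%:R : R)%:C.
Proof. by rewrite rmorph_nat. Qed.

End Complex_sqnorm.

Section Coordinates.
Variables (R : realType) (n : nat).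
Local Open Scope complex_scope.
Implicit Types (p v : Cn R n) (f : 'I_n.+1 -> R[i]).

Definition of_zc f : Cn R n := (\row_j Re (f j), \row_j Im (f j)).

Lemma zc_of_zc f j : zc (of_zc f) j = f j.
Proof. by rewrite /zc !mxE; case: (f j). Qed.

Lemma zc_mul_i v j : zc (mul_i v) j = 'i * zc v j.
Proof. by rewrite /zc /= mxE; apply/eqP; rewrite eq_complex /= !mul0r !mul1r sub0r add0r !eqxx. Qed.

Lemma rdotE p v : rdot p v = \sum_j Re ((zc p j)^* * zc v j).
Proof. by apply: eq_bigr => j _; rewrite /zc /=; ring. Qed.

End Coordinates.

Section Liouville_form.
Variables (R : realType) (n : nat).
Local Open Scope complex_scope.
Implicit Types (c : 'I_n.+1 -> R) (p u v w : Cn R n).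

(* [-d^C] of the potential [1/8 sum_j c_j |z_j|^2], see [dC_phi]. *)
Definition liouville_form c : oneform R n := fun p v =>
  4^-1 * \sum_j c j * (p.1 ord0 j * v.2 ord0 j - p.2 ord0 j * v.1 ord0 j).

Lemma liouville_formE c p v :
  liouville_form c p v = 4^-1 * \sum_j c j * Im ((zc p j)^* * zc v j).
Proof. by congr (_ * _); apply: eq_bigr => j _; rewrite /zc /=; ring. Qed.

Lemma liouville_formZD c p k u w :
  liouville_form c p (k *: u + w) = k * liouville_form c p u + liouville_form c p w.
Proof.
rewrite /liouville_form mulrCA -mulrDr; congr (_ * _).
by rewrite mulr_sumr -big_split; apply: eq_bigr => j _; rewrite /= !mxE; ring.
Qed.

Lemma liouville_formC c p v : liouville_form c v p = - liouville_form c p v.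
Proof.
by rewrite /liouville_form -mulrN -sumrN; congr (_ * _); apply: eq_bigr => j _; ring.
Qed.

Lemma derive_liouville_form c p u w :
  'D_u (fun q => liouville_form c q w) p = liouville_form c u w.
Proof.
apply: (derive_along_quadratic (B := 0)) => h.
by rewrite !(liouville_formC c w) liouville_formZD; ring.
Qed.

Lemma dform_liouville_form c p u w :
  dform (liouville_form c) p u w = 2 * liouville_form c u w.
Proof. by rewrite /dform !derive_liouville_form (liouville_formC c w u); ring. Qed.

Lemma liouville_form_CL_invariant (a : 'I_n.+1 -> nat) eps c :
  CL_invariant a eps (liouville_form c).
Proof.
move=> m p v _ _; rewrite /liouville_form /CL_act /=; congr (_ * _).
apply: eq_bigr => j _; rewrite !mxE.
set C := cos _; set S := sin _; have hCS : C ^+ 2 + S ^+ 2 = 1 by exact: cos2Dsin2.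
set x := p.1 _ _; set y := p.2 _ _; set v1 := v.1 _ _; set v2 := v.2 _ _.
by rewrite -[RHS]mulr1 -hCS; ring.
Qed.

Lemma liouville_form_mul_i_gt0 c u : (forall j, 0 < c j) -> u != 0 ->
  0 < liouville_form c u (mul_i u).
Proof.
move=> c_gt0 u_neq0; rewrite /liouville_form /mul_i /=.
under eq_bigr do rewrite mxE.
have term_ge0 j : 0 <= c j * (u.1 ord0 j * u.1 ord0 j - u.2 ord0 j * - u.2 ord0 j).
  by have := c_gt0 j; nra.
apply: mulr_gt0 => //; rewrite lt_def; apply/andP; split; last first.
  by apply: sumr_ge0 => j _; exact: term_ge0.
apply: contra u_neq0 => /eqP /(psumr_eq0P (fun j _ => term_ge0 j)) u0.
clear term_ge0; case: u u0 => u1 u2 /= u0; apply/eqP; congr pair; apply/matrixP => i j;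
  rewrite ord1 !mxE; have /eqP := u0 j isT;
  by rewrite mulf_eq0 gt_eqF //= => /eqP; nra.
Qed.

End Liouville_form.

Section Liouville_field.
Variables (R : realType) (n : nat).
Local Open Scope complex_scope.
Implicit Types (p w : Cn R n).
Variables (c : 'I_n.+1 -> R) (G : 'I_n.+1 -> R[i]).
Hypothesis c_gt0 : forall j, 0 < c j.

Let c_neq0 j : c j != 0. Proof. exact: lt0r_neq0. Qed.

(* The ambient Liouville field [p/2] plus a multiple [b] of the [c]-weighted
   conjugate gradient [conj G_j / c_j]: the correction is [d lambda]-orthogonal
   to the kernel of [G], and [b] is chosen below to make the field tangent. *)
Definition liouville_field p (b : R[i]) : Cn R n :=
  of_zc (fun j => zc p j * (2^-1)%:C + b * (G j)^* * ((c j)^-1)%:C).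

Lemma liouville_field_kernel p b :
  \sum_j G j * zc (liouville_field p b) j =
  (\sum_j G j * zc p j) * (2^-1)%:C + b * (\sum_j sqnormc (G j) / c j)%:C.
Proof.
rewrite rmorph_sum mulr_suml mulr_sumr -big_split /=; apply: eq_bigr => j _.
rewrite zc_of_zc; have := c_neq0 j; case: (zc p j) (G j) b => [z1 z2] [g1 g2] [b1 b2] hc.
by apply/eqP; rewrite eq_complex /sqnormc /=; apply/andP; split; apply/eqP; field.
Qed.

Lemma liouville_field_contract p b w : \sum_j G j * zc w j = 0 ->
  2 * liouville_form c (liouville_field p b) w = liouville_form c p w.
Proof.
move=> hw; apply/eqP; rewrite -subr_eq0 !liouville_formE mulrCA -mulrBr mulr_sumr -sumrB.
have -> : \sum_j (2 * (c j * Im ((zc (liouville_field p b) j)^* * zc w j)) -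
                  c j * Im ((zc p j)^* * zc w j)) =
          \sum_j 2 * Im (b^* * (G j * zc w j)).
  apply: eq_bigr => j _; rewrite zc_of_zc; have := c_neq0 j.
  by case: (zc p j) (zc w j) (G j) b => [z1 z2] [w1 w2] [g1 g2] [b1 b2] hc /=; field.
by rewrite -mulr_sumr -Im_sum -mulr_sumr hw !mulr0.
Qed.

Lemma rdot_liouville_field p b :
  rdot p (liouville_field p b) = rdot p p / 2 + \sum_j Re (b * (zc p j * G j)^* ) / c j.
Proof.
rewrite !rdotE mulr_suml -big_split; apply: eq_bigr => j _.
rewrite zc_of_zc; have := c_neq0 j.
by case: (zc p j) (G j) b => [z1 z2] [g1 g2] [b1 b2] hc /=; field.
Qed.

Lemma liouville_field_outward p :
  \sum_j Re ((\sum_k G k * zc p k) * (zc p j * G j)^* ) / c j <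
    (\sum_j sqnormc (G j) / c j) * rdot p p ->
  exists Y, \sum_j G j * zc Y j = 0 /\
    (forall w, \sum_j G j * zc w j = 0 ->
       dform (liouville_form c) p Y w = liouville_form c p w) /\
    0 < rdot p Y.
Proof.
set S := \sum_k G k * zc p k; set H := \sum_j sqnormc (G j) / c j => gap.
have H_gt0 : 0 < H.
  have term_ge0 j : 0 <= sqnormc (G j) / c j by rewrite divr_ge0 ?sqnormc_ge0 ?ltW.
  rewrite lt_def (sumr_ge0 _ (fun j _ => term_ge0 j)) andbT.
  apply: contraTneq gap => H0; rewrite H0 mul0r -leNgt.
  have G0 j : G j = 0.
    apply: sqnormc_eq0; move/eqP: (psumr_eq0P (fun j _ => term_ge0 j) H0 (i := j) isT).
    by rewrite mulf_eq0 invr_eq0 (negbTE (c_neq0 j)) orbF => /eqP.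
  by rewrite big1 // => j _; rewrite G0 mulr0 rmorph0 mulr0 mul0r.
pose b := (- (2 * H)^-1)%:C * S.
exists (liouville_field p b); split; [|split].
- rewrite liouville_field_kernel -/S /b -mulrA mulrCA -rmorphM /= -/H.
  have -> : - (2 * H)^-1 * H = - 2^-1 by field; rewrite gt_eqF.
  by rewrite rmorphN mulrN subrr.
- by move=> w hw; rewrite dform_liouville_form; exact: liouville_field_contract.
- rewrite rdot_liouville_field.
  have -> : \sum_j Re (b * (zc p j * G j)^* ) / c j =
            - (2 * H)^-1 * \sum_j Re (S * (zc p j * G j)^* ) / c j.
    by rewrite mulr_sumr; apply: eq_bigr => j _; rewrite /b -mulrA Re_mul_real mulrA.
  rewrite mulNr subr_gt0 mulrC ltr_pdivrMr ?mulr_gt0 //.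
  by have -> : rdot p p / 2 * (2 * H) = H * rdot p p by field.
Qed.

End Liouville_field.

Section Given_forms.
Variables (R : realType) (n : nat) (a : 'I_n.+1 -> nat).
Local Open Scope complex_scope.

Lemma dC_phi (t : R) (p v : Cn R n) : dC (phi a t) p v = - liouville_form (cj a t) p v.
Proof.
rewrite /dC (derive_along_quadratic (A := - liouville_form (cj a t) p v)
  (B := phi a t (mul_i v))) // => h.
rewrite /phi /liouville_form -mulNr !mulr_sumr -!big_split /=.
by apply: eq_bigr => j _; rewrite /mul_i /= !mxE; field.
Qed.

Lemma lambda_aE (p v : Cn R n) : lambda_a a p v = liouville_form (fun j => (a j)%:R) p v.
Proof.
have ReiM (k : R) x : Re ((0 +i* k) * x) = - k * Im x by case: x => ? ? /=; ring.
rewrite /lambda_a ReiM Im_sum mulr_sumr /liouville_form mulr_sumr.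
by apply: eq_bigr => j _; rewrite natrC /zc /=; field.
Qed.

End Given_forms.

Section Brieskorn.
Variables (R : realType) (n : nat) (a : 'I_n.+1 -> nat).
Hypothesis a_gt1 : forall j, (1 < a j)%N.

Lemma natr_a_ge2 j : 2 <= (a j)%:R :> R.
Proof. by rewrite (ler_nat R 2). Qed.

Lemma natr_a_gt0 j : 0 < (a j)%:R :> R.
Proof. by have := natr_a_ge2 j; lra. Qed.

(* [weight j s = weight_kappa s * a_j / weight_den j s], so [1 / weight j s] is
   affine in [s] up to the positive factor [weight_kappa s] (see [invr_weight]),
   while [weight j s] itself stays polynomial in [s]. *)
Definition weight_den j (s : R) : R := (1 - s) * (a j)%:R + s.
Definition weight_scale (s : R) : R := (1 - s) / \prod_k (a k)%:R + s.
Definition weight_kappa (s : R) : R := weight_scale s * \prod_k weight_den k s.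
Definition weight j (s : R) : R :=
  (a j)%:R * weight_scale s * \prod_(k < n.+1 | k != j) weight_den k s.

Lemma weight_den_gt0 j s : 0 <= s <= 1 -> 0 < weight_den j s.
Proof. by move=> /andP[s_ge0 s_le1]; have := natr_a_ge2 j; rewrite /weight_den; nra. Qed.

Lemma weight_scale_gt0 s : 0 <= s <= 1 -> 0 < weight_scale s.
Proof.
move=> /andP[s_ge0 s_le1]; rewrite /weight_scale.
have : 0 < (\prod_k (a k)%:R : R)^-1 by rewrite invr_gt0 prodr_gt0 // => k _; exact: natr_a_gt0.
nra.
Qed.

Lemma weight_kappa_gt0 s : 0 <= s <= 1 -> 0 < weight_kappa s.
Proof.
move=> s01; rewrite mulr_gt0 ?weight_scale_gt0 //.
by rewrite prodr_gt0 // => k _; exact: weight_den_gt0.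
Qed.

Lemma weight_gt0 j s : 0 <= s <= 1 -> 0 < weight j s.
Proof.
move=> s01; rewrite !mulr_gt0 ?natr_a_gt0 ?weight_scale_gt0 //.
by rewrite prodr_gt0 // => k _; exact: weight_den_gt0.
Qed.

Lemma weight0 j : weight j 0 = 1.
Proof.
have den0 k : weight_den k 0 = (a k)%:R by rewrite /weight_den subr0 mul1r addr0.
rewrite /weight (eq_bigr _ (fun k _ => den0 k)) /weight_scale subr0 mul1r addr0.
have a_neq0 k : (a k)%:R != 0 :> R by rewrite gt_eqF ?natr_a_gt0.
have prod_neq0 : \prod_(k < n.+1 | k != j) (a k)%:R != 0 :> R.
  by rewrite prodf_seq_neq0; apply/allP => k _; apply/implyP => _; exact: a_neq0.
by rewrite (bigD1 j) //=; field; rewrite prod_neq0 a_neq0.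
Qed.

Lemma weight1 j : weight j 1 = (a j)%:R.
Proof.
have den1 k : weight_den k 1 = 1 by rewrite /weight_den subrr mul0r add0r.
by rewrite /weight big1 // /weight_scale subrr mul0r add0r !mulr1.
Qed.

Lemma invr_weight j s : 0 <= s <= 1 ->
  (weight j s)^-1 = ((1 - s) + s / (a j)%:R) / weight_kappa s.
Proof.
move=> s01; have den_neq0 := lt0r_neq0 (weight_den_gt0 j s01).
have kappa_neq0 := lt0r_neq0 (weight_kappa_gt0 s01).
have a_neq0 := lt0r_neq0 (natr_a_gt0 j).
have -> : weight j s = (a j)%:R * weight_kappa s / weight_den j s.
  by rewrite /weight /weight_kappa [in RHS](bigD1 j) //=; field.
move: den_neq0; rewrite /weight_den => den_neq0.
by field; rewrite kappa_neq0 a_neq0 den_neq0.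
Qed.

Lemma polyfun_weight j : polyfun (fun q : R * Cn R n => weight j q.1).
Proof.
have polyfun_affine x : polyfun (fun q : R * Cn R n => (1 - q.1) * x + q.1).
  apply: polyfun_add; last exact: polyfun_param.
  apply: polyfun_mul; last exact: polyfun_cst.
  by apply: polyfun_sub; [exact: polyfun_cst | exact: polyfun_param].
rewrite /weight /weight_scale /weight_den.
apply: polyfun_mul; first apply: polyfun_mul.
- exact: polyfun_cst.
- exact: polyfun_affine.
- by apply: polyfun_prod => k; exact: polyfun_affine.
Qed.

Lemma liouville_form_weight_smooth v :
  smooth (fun q : R * Cn R n => liouville_form (weight ^~ q.1) q.2 v).
Proof.
apply: polyfun_smooth; rewrite /liouville_form.
apply: polyfun_mul; first exact: polyfun_cst.
apply: polyfun_sum => j; apply: polyfun_mul; first exact: polyfun_weight.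
by apply: polyfun_sub; apply: polyfun_mul;
  (exact: polyfun_re || exact: polyfun_im || exact: polyfun_cst).
Qed.

Local Open Scope complex_scope.

Definition brieskorn_grad (p : Cn R n) j : R[i] := (a j)%:R * zc p j ^+ (a j).-1.

Definition degree_sum : nat := \sum_j a j.
Local Notation M := (degree_sum%:R : R).

(* On the unit sphere some [|z_j|^2 >= 1/(n+1)], and then
   [theta <= |z_j|^(2 (a_j - 1))]. *)
Definition theta : R := (n.+1)%:R^-1 ^+ degree_sum.
Definition brieskorn_eps0 : R := theta / M ^+ 2.

Lemma a_le_degree_sum j : (a j <= degree_sum)%N.
Proof. by rewrite /degree_sum (bigD1 j) //= leq_addr. Qed.

Lemma natr_a_le_M j : (a j)%:R <= M.
Proof. by rewrite ler_nat a_le_degree_sum. Qed.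

Lemma degree_sum_ge2 : 2 <= M.
Proof. by apply: le_trans (natr_a_le_M ord0); exact: natr_a_ge2. Qed.

Lemma theta_gt0 : 0 < theta.
Proof. by rewrite exprn_gt0 // invr_gt0 ltr0n. Qed.

Lemma brieskorn_eps0_gt0 : 0 < brieskorn_eps0.
Proof. by rewrite divr_gt0 ?theta_gt0 // exprn_gt0 //; have := degree_sum_ge2; lra. Qed.

Section At_boundary_point.
Variables (eps : R) (p : Cn R n).
Hypotheses (eps_gt0 : 0 < eps) (eps_lt : eps < brieskorn_eps0) (p_bd : dXeps a eps p).

Local Notation z j := (zc p j).
Local Notation G := (brieskorn_grad p).
Local Notation u j := (zc p j ^+ a j).
Local Notation S := (\sum_j brieskorn_grad p j * zc p j).

Lemma rdot_pp : rdot p p = 1.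
Proof. by case: p_bd. Qed.

Lemma sum_sqnormc_z : \sum_j sqnormc (z j) = 1.
Proof.
by rewrite -rdot_pp /rdot; apply: eq_bigr => j _; rewrite /sqnormc /zc /= !expr2.
Qed.

Lemma sum_u : \sum_j u j = eps%:C.
Proof. by case: p_bd. Qed.

Lemma grad_mul_z j : G j * z j = (a j)%:R * u j.
Proof. by rewrite -mulrA -exprSr prednK // (ltn_trans _ (a_gt1 j)). Qed.

Lemma sqnormc_grad j : sqnormc (G j) = (a j)%:R ^+ 2 * sqnormc (z j) ^+ (a j).-1.
Proof. by rewrite sqnormcM natrC sqnormc_real sqnormcX. Qed.

Lemma exists_large_grad : exists j, (a j)%:R * theta <= sqnormc (G j).
Proof.
have [j] := exists_ge_mean (fun j => sqnormc (z j)).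
rewrite sum_sqnormc_z div1r => z_large; exists j; rewrite sqnormc_grad.
have inv_n01 : 0 <= ((n.+1)%:R^-1 : R) <= 1 by rewrite invr_ge0 ler0n invf_le1 ?ler1n.
have : theta <= sqnormc (z j) ^+ (a j).-1.
  apply: ler_expn_lb inv_n01 z_large _.
  exact: leq_trans (leq_pred _) (a_le_degree_sum j).
set X := _ ^+ (a j).-1 => theta_le_X; have a_ge2 := natr_a_ge2 j.
apply: le_trans (_ : (a j)%:R * X <= _); first by rewrite ler_wpM2l //; lra.
by rewrite expr2 -mulrA ler_pM2l ?ler_peMl //; have := theta_gt0; lra.
Qed.

Lemma Re_S_le : Re S <= M.
Proof.
rewrite Re_sum /degree_sum natr_sum; apply: ler_sum => j _.
rewrite grad_mul_z natrC Re_mul_real -[X in _ <= X]mulr1 ler_wpM2l ?ler0n //.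
have : sqnormc (u j) <= 1.
  rewrite sqnormcX exprn_ile1 ?sqnormc_ge0 // -sum_sqnormc_z.
  by apply: (ler_psum_term (F := fun j => sqnormc (z j))) => i; exact: sqnormc_ge0.
by have := Re_sqr_le (u j); nra.
Qed.

Lemma eps_Re_S : eps * Re S = \sum_j Re (S * (u j)^*).
Proof. by rewrite -Re_mulJ_real -sum_u rmorph_sum mulr_sumr Re_sum. Qed.

Lemma sqnormc_S : sqnormc S = \sum_j (a j)%:R * Re (S * (u j)^*).
Proof.
rewrite -Re_Jmul mulrC rmorph_sum mulr_sumr Re_sum; apply: eq_bigr => j _.
by rewrite grad_mul_z natrC Re_mulJ_realM.
Qed.

Lemma eps_Re_S_small : eps * Re S < theta / M.
Proof.
have M_gt0 : 0 < M by have := degree_sum_ge2; lra.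
apply: le_lt_trans (_ : eps * M < _); first by rewrite ler_wpM2l ?Re_S_le // ltW.
have -> : theta / M = brieskorn_eps0 * M by rewrite /brieskorn_eps0; field; rewrite gt_eqF.
by rewrite ltr_pM2r.
Qed.

Lemma sum_sqnormc_grad_defect :
  \sum_j sqnormc (G j - S * (z j)^*) = \sum_j sqnormc (G j) - sqnormc S.
Proof.
under eq_bigr do rewrite sqnormcB_mulJ.
rewrite !big_split /= sumrN -!mulr_sumr -Re_sum -mulr_sumr sum_sqnormc_z Re_Jmul.
by ring.
Qed.

Lemma radial_grad_lower : (forall j, G j = S * (z j)^*) -> sqnormc S / M <= eps * Re S.
Proof.
move=> G_radial; rewrite eps_Re_S.
have -> : sqnormc S / M = \sum_j sqnormc S * sqnormc (z j) / M.
  by rewrite -mulr_suml -mulr_sumr sum_sqnormc_z mulr1.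
apply: ler_sum => j _; have a_gt0 := natr_a_gt0 j.
have -> : Re (S * (u j)^*) = sqnormc S * sqnormc (z j) / (a j)%:R.
  rewrite -Re_mulJ_radial -G_radial grad_mul_z natrC Re_mulJ_realM.
  by field; rewrite gt_eqF.
rewrite ler_wpM2l ?mulr_ge0 ?sqnormc_ge0 // lef_pV2 ?natr_a_le_M //.
by rewrite posrE; have := degree_sum_ge2; lra.
Qed.

Lemma sqnormc_S_lt : sqnormc S < \sum_j sqnormc (G j).
Proof.
rewrite lt_neqAle -subr_ge0 -sum_sqnormc_grad_defect.
rewrite (sumr_ge0 _ (fun j _ => sqnormc_ge0 _)) andbT.
apply/negP => /eqP S_eq.
have G_radial j : G j = S * (z j)^*.
  apply/eqP; rewrite -subr_eq0; apply/eqP/sqnormc_eq0.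
  move: sum_sqnormc_grad_defect; rewrite S_eq subrr.
  by move/(psumr_eq0P (fun j _ => sqnormc_ge0 _)); apply.
have [j0 large_j0] := exists_large_grad.
have theta_le_S : theta <= sqnormc S.
  rewrite S_eq; apply: le_trans (ler_psum_term (F := fun j => sqnormc (G j)) j0 _) => [|j];
    last exact: sqnormc_ge0.
  apply: le_trans large_j0; rewrite ler_peMl ?(ltW theta_gt0) //.
  by have := natr_a_ge2 j0; lra.
have M_gt0 : 0 < M by have := degree_sum_ge2; lra.
have := radial_grad_lower G_radial; have := eps_Re_S_small.
have : theta / M <= sqnormc S / M by rewrite ler_pM2r ?invr_gt0.
lra.
Qed.

Lemma eps_Re_S_lt : eps * Re S < \sum_j sqnormc (G j) / (a j)%:R.
Proof.
apply: lt_le_trans eps_Re_S_small _.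
have [j0 large_j0] := exists_large_grad; have a_gt0 := natr_a_gt0 j0.
apply: le_trans (ler_psum_term (F := fun j => sqnormc (G j) / (a j)%:R) j0 _); last first.
  by move=> j; rewrite divr_ge0 ?sqnormc_ge0 ?ler0n.
rewrite ler_pdivlMr // (le_trans _ large_j0) // mulrC ler_pM2l //.
rewrite ler_pdivrMr; last by have := degree_sum_ge2; lra.
by rewrite ler_peMr ?(ltW theta_gt0) //; have := degree_sum_ge2; lra.
Qed.

Lemma weighted_gap s : 0 <= s <= 1 ->
  \sum_j Re (S * (z j * G j)^*) / weight j s <
    (\sum_j sqnormc (G j) / weight j s) * rdot p p.
Proof.
move=> s01; rewrite rdot_pp mulr1 -subr_gt0 -sumrB.
have -> : \sum_j (sqnormc (G j) / weight j s - Re (S * (z j * G j)^*) / weight j s) =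
    (weight_kappa s)^-1 *
    \sum_j (sqnormc (G j) - (a j)%:R * Re (S * (u j)^*)) * ((1 - s) + s / (a j)%:R).
  rewrite mulr_sumr; apply: eq_bigr => j _.
  by rewrite [zc p j * _]mulrC grad_mul_z natrC Re_mulJ_realM -mulrBl invr_weight //; ring.
have -> : \sum_j (sqnormc (G j) - (a j)%:R * Re (S * (u j)^*)) * ((1 - s) + s / (a j)%:R) =
    (1 - s) * (\sum_j sqnormc (G j) - sqnormc S) +
    s * (\sum_j sqnormc (G j) / (a j)%:R - eps * Re S).
  rewrite sqnormc_S eps_Re_S -!sumrB !mulr_sumr -big_split /=; apply: eq_bigr => j _.
  by move: (natr_a_gt0 j) => a_gt0; field; rewrite gt_eqF.
rewrite mulr_gt0 ?invr_gt0 ?weight_kappa_gt0 // convex_comb_gt0 //.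
  by rewrite subr_gt0 sqnormc_S_lt.
by rewrite subr_gt0 eps_Re_S_lt.
Qed.

End At_boundary_point.

Lemma liouville_domain_liouville_form eps (c : 'I_n.+1 -> R) : (forall j, 0 < c j) ->
  (forall p, dXeps a eps p ->
    \sum_j Re ((\sum_k brieskorn_grad p k * zc p k) * (zc p j * brieskorn_grad p j)^*) / c j <
    (\sum_j sqnormc (brieskorn_grad p j) / c j) * rdot p p) ->
  liouville_domain a eps (liouville_form c).
Proof.
move=> c_gt0 gap; split; [|split].
- move=> p p_bd.
  have [Y [Y_tan [_ Y_out]]] := liouville_field_outward c_gt0 (gap p p_bd).
  by exists Y; split; [exact: Y_tan | exact: lt0r_neq0].
- move=> p _ v v_tan v_neq0; exists (mul_i v); split.
    rewrite /tangent; under eq_bigr do rewrite zc_mul_i mulrCA.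
    by rewrite -mulr_sumr v_tan mulr0.
  by rewrite dform_liouville_form mulf_neq0 // lt0r_neq0 // liouville_form_mul_i_gt0.
- move=> p p_bd.
  by have [Y [Y_tan [Y_liouville Y_out]]] := liouville_field_outward c_gt0 (gap p p_bd); exists Y.
Qed.

End Brieskorn.

Theorem proposition6p5 (R : realType) (n : nat) (a : 'I_n.+1 -> nat)
    (ha : forall j, (1 < a j)%N) :
  exists eps0 : R, 0 < eps0 /\
    forall eps : R, 0 < eps -> eps < eps0 ->
      CL_liouville_homotopy a eps
        (fun p v => - dC (phi a 0) p v) (lambda_a a).
Proof.
exists (brieskorn_eps0 R a); split; first exact: brieskorn_eps0_gt0.
move=> eps eps_gt0 eps_lt.
exists (fun s => liouville_form (weight a ^~ s)); split; [|split; [|split; [|split]]].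
- by move=> s p k u w; exact: liouville_formZD.
- exact: liouville_form_weight_smooth.
- move=> s s01; split; first exact: liouville_form_CL_invariant.
  apply: liouville_domain_liouville_form => [j|p p_bd]; first exact: weight_gt0.
  exact (weighted_gap ha eps_gt0 eps_lt p_bd s01).
- move=> p v _ _; rewrite dC_phi opprK; congr liouville_form.
  by apply/funext => j; rewrite weight0 // /cj mul0r addr0.
- move=> p v _ _; rewrite lambda_aE; congr liouville_form.
  by apply/funext => j; exact: weight1.
Qed.
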